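(* Let $G$ be a connected weighted multigraph on the vertex set $V$, $|V|\ge2$, with positive edge weights, weighted adjacency matrix $A$, spectral radius $\rho$ and Perron vector $p=(p_1,\dots,p_n)^{\mathsf T}$, and let $\Lambda=\rho I-A$. Then for all distinct $i,j\in V$, $$(\Lambda_{jj})^{-1}_i\,a_{\setminus j\,j}=\frac{p_i}{p_j}.$$
   Context: $A=(a_{ij})$ has $a_{ij}$ equal to the sum of weights of the edges joining $i$ and $j$ (loops, multiple edges allowed). The Perron vector $p$ is the positive eigenvector of $A$ for $\rho$ with entries summing to 1. Matrices are indexed by vertices; $\Lambda_{jj}$ is $\Lambda$ with row and column $j$ deleted (indexed by $V\setminus\{j\}$); $N^{-1}_i$ is the row of $N^{-1}$ indexed by $i$; $a_{\setminus j\,j}$ is column $j$ of $A$ with $a_{jj}$ removed. *)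

From HB Require Import structures.
From mathcomp Require Import all_boot all_order all_algebra.
From mathcomp Require Import complex.
Set Implicit Arguments. Unset Strict Implicit. Unset Printing Implicit Defensive.
Import Order.TTheory GRing.Theory Num.Theory.
Local Open Scope ring_scope.

(* A weighted multigraph on the vertex set 'I_n: a finite set E of edges,
   each edge e has (unordered) endpoints (ends e).1, (ends e).2 (equal for a
   loop) and a weight w e. *)
Definition joins (n : nat) (E : finType) (ends : E -> 'I_n * 'I_n)
  (e : E) (i j : 'I_n) : bool :=
  (((ends e).1 == i) && ((ends e).2 == j)) || (((ends e).1 == j) && ((ends e).2 == i)).

Definition wadj (R : pzRingType) (n : nat) (E : finType)
  (ends : E -> 'I_n * 'I_n) (w : E -> R) : 'M[R]_n :=
  \matrix_(i, j) \sum_(e : E | joins ends e i j) w e.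

Definition mg_connected (n : nat) (E : finType) (ends : E -> 'I_n * 'I_n) : Prop :=
  forall u v : 'I_n, connect [rel x y | [exists e : E, joins ends e x y]] u v.

Definition is_spectral_radius (R : rcfType) (n : nat) (A : 'M[R]_n) (rho : R) : Prop :=
  let Ac := map_mx (fun x : R => (x%:C)%C) A in
  (exists2 l : R[i], eigenvalue Ac l & `|l| = (rho%:C)%C) /\
  (forall l : R[i], eigenvalue Ac l -> `|l| <= (rho%:C)%C).

Definition is_perron_vector (R : rcfType) (n : nat) (A : 'M[R]_n) (rho : R)
  (p : 'cV[R]_n) : Prop :=
  [/\ A *m p = rho *: p, forall i, 0 < p i 0 & \sum_i p i 0 = 1].

From HB Require Import structures.
From mathcomp Require Import all_boot all_order all_algebra.
From mathcomp Require Import complex.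
Set Implicit Arguments. Unset Strict Implicit. Unset Printing Implicit Defensive.
Import Order.TTheory GRing.Theory Num.Theory.
Local Open Scope ring_scope.

(* Since [Lam *m p = 0], deleting row and column j shows that [row' j p] solves
   [Ljj *m x = p_j a_{\j j}]; this is the formula once [Ljj] is invertible.
   If [Ljj] were singular, a nonzero left kernel vector v, padded with 0 at j
   and replaced by its absolute values, would be a nonnegative row y with
   [rho y <= y A].  Pairing with the positive right eigenvector p forces
   [y A = rho y], and then the zero set of y, which contains j, is closed
   under adjacency; connectivity makes y vanish, a contradiction. *)

Section Minors.
Variables (R : comPzRingType) (n : nat).

Definition ext_row (j : 'I_n) (v : 'rV[R]_n.-1) : 'rV[R]_n :=
  \row_m (if unlift j m is Some k then v 0 k else 0).

Lemma ext_row_none j v : ext_row j v 0 j = 0.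
Proof. by rewrite mxE unlift_none. Qed.

Lemma ext_row_lift j v k : ext_row j v 0 (lift j k) = v 0 k.
Proof. by rewrite mxE liftK. Qed.

Lemma ext_row_mul_lift j v (M : 'M[R]_n) l :
  (ext_row j v *m M) 0 (lift j l) = (v *m row' j (col' j M)) 0 l.
Proof.
rewrite !mxE (bigD1_ord j) //= ext_row_none mul0r add0r.
by apply: eq_bigr => k _; rewrite ext_row_lift !mxE.
Qed.

Lemma row'_col'_scalar_mx j (a : R) : row' j (col' j a%:M) = a%:M :> 'M_n.-1.
Proof. by apply/matrixP => k l; rewrite !mxE (inj_eq (@lift_inj _ j)). Qed.

Lemma mulmx_row'_col' j (M : 'M[R]_n) (x : 'cV[R]_n) :
  row' j (col' j M) *m row' j x = row' j (M *m x) - x j 0 *: row' j (col j M).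
Proof.
apply/matrixP => k z; rewrite (ord1 z) !mxE (bigD1_ord j) //=.
rewrite [X in _ - X]mulrC addrAC subrr add0r.
by apply: eq_bigr => l _; rewrite !mxE.
Qed.

End Minors.

Lemma ler_norm_mulmx (R : realDomainType) (m n : nat) (v : 'rV[R]_m)
    (B : 'M[R]_(m, n)) :
  (forall k l, 0 <= B k l) ->
  forall l, `|(v *m B) 0 l| <= (map_mx Num.norm v *m B) 0 l.
Proof.
move=> B_ge0 l; rewrite !mxE; apply: le_trans (ler_norm_sum _ _ _) _.
by apply: ler_sum => k _; rewrite normrM (ger0_norm (B_ge0 _ _)) mxE.
Qed.

Lemma eigenrow_zero_propagates (R : realDomainType) (n : nat) (A : 'M[R]_n)
    (rho : R) (y : 'rV[R]_n) x z :
  (forall k l, 0 <= A k l) -> (forall m, 0 <= y 0 m) -> y *m A = rho *: y ->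
  0 < A x z -> y 0 z = 0 -> y 0 x = 0.
Proof.
move=> A_ge0 y_ge0 yA Axz yz0.
have : (y *m A) 0 z == 0 by rewrite yA mxE yz0 mulr0.
rewrite mxE psumr_eq0 => [/allP/(_ x (mem_index_enum _))|m _]; last first.
  exact: mulr_ge0.
by rewrite implyTb mulf_eq0 (gt_eqF Axz) orbF => /eqP.
Qed.

Section PerronVector.
Variables (R : realFieldType) (n : nat) (A : 'M[R]_n) (rho : R) (p : 'cV[R]_n).
Hypothesis A_ge0 : forall k l, 0 <= A k l.
Hypothesis Ap : A *m p = rho *: p.
Hypothesis p_gt0 : forall k, 0 < p k 0.

Lemma subinvariant_row_eigen (y : 'rV[R]_n) :
  (forall l, rho * y 0 l <= (y *m A) 0 l) -> y *m A = rho *: y.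
Proof.
move=> sub; set d := y *m A - rho *: y.
have d_ge0 l : 0 <= d 0 l by move: (sub l); rewrite /d !mxE subr_ge0.
have dp0 : (d *m p) 0 0 == 0.
  by rewrite /d mulmxBl -mulmxA Ap -scalemxAl -scalemxAr subrr mxE.
apply/eqP; rewrite -subr_eq0; apply/eqP/rowP => l; rewrite [RHS]mxE.
move: dp0; rewrite mxE psumr_eq0 => [/allP/(_ l (mem_index_enum _))|m _].
  by rewrite implyTb mulf_eq0 (gt_eqF (p_gt0 _)) orbF => /eqP.
by rewrite mulr_ge0 // ltW.
Qed.

Variable j : 'I_n.
Let Ljj := row' j (col' j (rho%:M - A)).

Lemma perron_minor_unitmx :
  (forall y : 'rV[R]_n, (forall m, 0 <= y 0 m) -> y *m A = rho *: y ->
     y 0 j = 0 -> y = 0) ->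
  Ljj \in unitmx.
Proof.
move=> irred; rewrite unitmxE unitfE; apply/negP => /det0P [v v_neq0 vL0].
have vB : v *m row' j (col' j A) = rho *: v.
  apply/eqP; move: vL0; rewrite /Ljj !linearB /= row'_col'_scalar_mx.
  by rewrite mul_mx_scalar => /eqP; rewrite subr_eq0 eq_sym.
set y := ext_row j (map_mx Num.norm v).
have y_ge0 m : 0 <= y 0 m.
  by rewrite mxE; case: (unlift j m) => // k; rewrite mxE.
have /subinvariant_row_eigen yA : forall l, rho * y 0 l <= (y *m A) 0 l.
  move=> l; case: (unliftP j l) => [l'|] ->; last first.
    by rewrite ext_row_none mulr0 mxE sumr_ge0 // => m _; rewrite mulr_ge0.
  rewrite ext_row_mul_lift ext_row_lift mxE.
  have B_ge0 k m : 0 <= row' j (col' j A) k m by rewrite !mxE.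
  apply: le_trans _ (ler_norm_mulmx v B_ge0 l').
  by rewrite vB mxE normrM ler_wpM2r // ler_norm.
apply/negP: v_neq0; apply/negPn/eqP/rowP => k.
have /rowP/(_ (lift j k)) := irred y y_ge0 yA (ext_row_none _ _).
by rewrite ext_row_lift !mxE => /normr0_eq0.
Qed.

Lemma perron_minor_solve :
  Ljj \in unitmx -> invmx Ljj *m row' j (col j A) = (p j 0)^-1 *: row' j p.
Proof.
move=> Lunit; have Lp : Ljj *m row' j p = p j 0 *: row' j (col j A).
  have Lam_p : (rho%:M - A) *m p = 0 by rewrite mulmxBl mul_scalar_mx Ap subrr.
  rewrite /Ljj mulmx_row'_col' Lam_p linear0 sub0r -scalerN; congr (_ *: _).
  apply/matrixP => k z; rewrite !mxE eq_sym (negbTE (neq_lift j k)).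
  by rewrite mulr0n sub0r opprK.
have -> : row' j (col j A) = (p j 0)^-1 *: (Ljj *m row' j p).
  by rewrite Lp scalerA mulVf ?gt_eqF // scale1r.
by rewrite -scalemxAr mulKmx.
Qed.

End PerronVector.

Section Multigraph.
Variables (R : realDomainType) (n : nat) (E : finType).
Variables (ends : E -> 'I_n * 'I_n) (w : E -> R).
Hypothesis w_gt0 : forall e, 0 < w e.

Lemma joinsC e k l : joins ends e k l = joins ends e l k.
Proof. by rewrite /joins orbC. Qed.

Lemma wadj_ge0 k l : 0 <= wadj ends w k l.
Proof. by rewrite mxE sumr_ge0 // => e _; rewrite ltW. Qed.

Lemma wadj_gt0 e k l : joins ends e k l -> 0 < wadj ends w k l.
Proof.
move=> ekl; rewrite mxE (bigD1 e) //= ltr_wpDr ?w_gt0 //.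
by rewrite sumr_ge0 // => f _; rewrite ltW.
Qed.

Lemma connected_eigenrow_eq0 rho (y : 'rV[R]_n) j :
  mg_connected ends -> (forall m, 0 <= y 0 m) ->
  y *m wadj ends w = rho *: y -> y 0 j = 0 -> y = 0.
Proof.
move=> conn y_ge0 yA yj0.
have zero_closed : closed [rel x z | [exists e, joins ends e x z]]
                          [pred m | y 0 m == 0].
  move=> x z /existsP [e exz]; rewrite !inE.
  have Azx : 0 < wadj ends w z x by apply: (wadj_gt0 (e := e)); rewrite joinsC.
  apply/eqP/eqP; apply: eigenrow_zero_propagates wadj_ge0 y_ge0 yA _ => //.
  exact: wadj_gt0 exz.
apply/rowP => m; have := closed_connect zero_closed (conn j m).
by rewrite !inE yj0 eqxx mxE => /esym/eqP.
Qed.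

End Multigraph.

Theorem lemma8 (R : rcfType) (n : nat) (E : finType)
  (ends : E -> 'I_n * 'I_n) (w : E -> R) (rho : R) (p : 'cV[R]_n) :
  (1 < n)%N ->
  (forall e, 0 < w e) ->
  mg_connected ends ->
  is_spectral_radius (wadj ends w) rho ->
  is_perron_vector (wadj ends w) rho p ->
  let A := wadj ends w in
  let Lam := rho%:M - A in
  forall (j : 'I_n) (i' : 'I_n.-1),
    let Ljj := row' j (col' j Lam) in
    let i := lift j i' in
    Ljj \in unitmx /\
    (row i' (invmx Ljj) *m row' j (col j A)) 0 0 = p i 0 / p j 0.
Proof.
move=> _ w_gt0 conn _ [Ap p_gt0 _] A Lam j i' Ljj i.
have A_ge0 := wadj_ge0 ends w_gt0.
have Ljj_unit : Ljj \in unitmx.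
  apply: perron_minor_unitmx A_ge0 Ap p_gt0 _ _ => y.
  exact: connected_eigenrow_eq0.
split=> //.
by rewrite -row_mul (perron_minor_solve Ap p_gt0 Ljj_unit) !mxE mulrC.
Qed.
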